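(* Let $\mathcal{A}=(Q,\delta,I,F)$ be a complete Büchi automaton and let $p,q\in Q$ with $p\preceq_{\mathit{de}}q$. Let $L_\top=\{w\in\Sigma^*\mid p\overset{w}{\leadsto}_F q\}$ and $L_\bot=\{w\in\Sigma^*\mid p\overset{w}{\leadsto}q\}$. Then $\mathcal{L}(q)\supseteq(L_\bot^*L_\top)^\omega$.
   Context: A Büchi automaton is $\mathcal{A}=(Q,\delta,I,F)$ over a finite alphabet $\Sigma$ with $\delta:Q\times\Sigma\to2^Q$, complete if $\delta(q,a)\neq\emptyset$ always. A run from $q$ on $\alpha=\alpha_0\alpha_1\cdots$ is $\rho$ with $\rho_0=q$, $\rho_{i+1}\in\delta(\rho_i,\alpha_i)$; it is accepting if some state of $F$ occurs infinitely often. $\mathcal{L}(q)$ is the set of infinite words with an accepting run from $q$. For $w\in\Sigma^*$, $p\overset{w}{\leadsto}q$ means $q$ is reachable from $p$ by a path reading $w$, and $p\overset{w}{\leadsto}_F q$ means there is such a path that contains an accepting state. For $L\subseteq\Sigma^*$: $L^*$ is the set of finite concatenations of words of $L$, $L_1L_2=\{w_1w_2\mid w_i\in L_i\}$, and $L^\omega=\{w_1w_2\cdots\in\Sigma^\omega\mid w_i\in L\}$. Delayed simulation: in the game from $(p_0,r_0)$, in round $i$ Spoiler picks $p_i\xrightarrow{\alpha_i}p_{i+1}$ and Duplicator answers $r_i\xrightarrow{\alpha_i}r_{i+1}$; a Duplicator strategy is a map $\sigma$ with $\sigma(r,p\xrightarrow{a}p')\in\delta(r,a)$ (no lookahead). Duplicator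 wins if for all $i$, $p_i\in F$ implies $r_k\in F$ for some $k\ge i$. $p\preceq_{\mathit{de}}r$ iff Duplicator has a winning strategy from $(p,r)$. *)

From mathcomp Require Import all_boot.
Set Implicit Arguments. Unset Strict Implicit. Unset Printing Implicit Defensive.

Record buchi (Sigma Q : finType) := Buchi {
  delta : Q -> Sigma -> {set Q};
  init  : {set Q};
  acc   : {set Q} }.

Section Buchi.
Variables (Sigma Q : finType) (A : buchi Sigma Q).

Definition complete : Prop := forall (q : Q) (a : Sigma), delta A q a != set0.

Definition run (q : Q) (al : nat -> Sigma) (rho : nat -> Q) : Prop :=
  rho 0 = q /\ forall i, rho i.+1 \in delta A (rho i) (al i).

Definition accepting (rho : nat -> Q) : Prop :=
  exists2 f, f \in acc A & forall n, exists2 m, n <= m & rho m = f.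

Definition lang (q : Q) (al : nat -> Sigma) : Prop :=
  exists rho, run q al rho /\ accepting rho.

(* reach p w q b : there is a path from p to q reading w; b records whether
   it visits an accepting state (endpoints included). *)
Inductive reach : Q -> seq Sigma -> Q -> bool -> Prop :=
| reach_nil q : reach q [::] q (q \in acc A)
| reach_cons p a p' w q b :
    p' \in delta A p a -> reach p' w q b -> reach p (a :: w) q ((p \in acc A) || b).

Definition reaches (p : Q) (w : seq Sigma) (q : Q) : Prop := exists b, reach p w q b.
Definition reachesF (p : Q) (w : seq Sigma) (q : Q) : Prop := reach p w q true.

(* Duplicator strategies (no lookahead): sigma r p a p' answers Spoiler's
   transition p -a-> p' from Duplicator's current state r. *)
Definition strategy (s : Q -> Q -> Sigma -> Q -> Q) : Prop :=
  forall r p a p', p' \in delta A p a -> s r p a p' \in delta A r a.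

Fixpoint dup_play (s : Q -> Q -> Sigma -> Q -> Q) (r0 : Q)
    (ps : nat -> Q) (al : nat -> Sigma) (n : nat) : Q :=
  match n with
  | 0 => r0
  | n'.+1 => s (dup_play s r0 ps al n') (ps n') (al n') (ps n'.+1)
  end.

Definition delayed_sim (p r : Q) : Prop :=
  exists s, strategy s /\
    forall (al : nat -> Sigma) (ps : nat -> Q), run p al ps ->
      forall i, ps i \in acc A ->
        exists2 k, i <= k & dup_play s r ps al k \in acc A.

End Buchi.

Definition star (Sigma : eqType) (L : seq Sigma -> Prop) (w : seq Sigma) : Prop :=
  exists ws : seq (seq Sigma), (forall u, u \in ws -> L u) /\ flatten ws = w.

Definition lconcat (Sigma : Type) (L1 L2 : seq Sigma -> Prop) (w : seq Sigma) : Prop :=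
  exists w1 w2, L1 w1 /\ L2 w2 /\ w = w1 ++ w2.

(* L^omega: infinite words w = w_0 w_1 w_2 ... with each w_i in L *)
Definition omega (Sigma : Type) (L : seq Sigma -> Prop) (al : nat -> Sigma) : Prop :=
  exists ws : nat -> seq Sigma,
    (forall i, L (ws i)) /\
    (forall n, flatten (mkseq ws n) = mkseq al (size (flatten (mkseq ws n)))) /\
    (forall m, exists n, m <= size (flatten (mkseq ws n))).

From mathcomp Require Import all_boot zify.
From Stdlib Require Import Classical ClassicalEpsilon.
Set Implicit Arguments. Unset Strict Implicit. Unset Printing Implicit Defensive.

(** The word splits into consecutive paths from [p] to [q], infinitely many of which
    meet [F]. Spoiler follows them one after the other, jumping from [q] back to [p]
    between two paths. Duplicator answers with a stack of pebbles: when a path starts,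
    a new pebble is put on [p], and the pebble that has just reached [q] starts
    answering it with the delayed-simulation strategy, as does every pebble for the
    one above it. A visit of a pebble to [F] forces a later visit of the pebble below
    it, so every visit of Spoiler to [F] eventually reaches the bottom pebble, whose
    play is a run from [q]; by pigeonhole it meets one accepting state infinitely
    often. *)

Lemma pigeonhole_inf_often (T : finType) (F : {set T}) (rho : nat -> T) :
  (forall N, exists2 n, N <= n & rho n \in F) ->
  exists2 f, f \in F & forall N, exists2 n, N <= n & rho n = f.
Proof.
move=> inf_F; apply: NNPP => no_f.
have /fin_all_exists [bound boundP] :
    forall f : T, exists N, forall n, N <= n -> f \in F -> rho n != f.
  move=> f; apply: NNPP => unbounded; apply: no_f; exists f => [|N].
    by apply: NNPP => fF; apply: unbounded; exists 0 => n _ /negP.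
  apply: NNPP => late; apply: unbounded; exists N => n Nn _.
  by apply/eqP => rho_n; apply: late; exists n.
have [n le_n rho_nF] := inf_F (\max_(f : T) bound f).
by have /negP := boundP _ n (leq_trans (leq_bigmax _) le_n) rho_nF.
Qed.

Section RestartingRun.

Variables (Sigma Q : finType) (A : buchi Sigma Q) (p q : Q).
Variable s : Q -> Q -> Sigma -> Q -> Q.
Hypothesis s_strategy : strategy A s.
Hypothesis s_wins : forall al ps, run A p al ps -> forall i, ps i \in acc A ->
  exists2 k, i <= k & dup_play s q ps al k \in acc A.

Variables (al : nat -> Sigma) (x e : nat -> Q).
Hypothesis e0 : e 0 = q.
Hypothesis spoiler_step : forall n, e n.+1 \in delta A (x n) (al n).
Hypothesis spoiler_restart : forall n, x n != e n -> e n = q /\ x n = p.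
Hypothesis spoiler_visits :
  forall N, exists2 n, N <= n & (x n \in acc A) || (e n \in acc A).

(* Spoiler stands on [x n] after having arrived on [e n]; the two differ only when it
   has just jumped from [q] back to [p]. [tower n l], for [l <= height n], is the state
   at time [n] of the [l]-th pebble of a stack: the top pebble [height n] carries
   Spoiler, every other pebble [l] answers the moves of pebble [l.+1] with [s], and each
   jump puts a new pebble on [p] above the pebble that has just reached [q].
   [answers] computes the new column from the top down. *)
Fixpoint height n : nat :=
  if n is n'.+1 then height n' + (x n != e n) else x 0 != e 0.

Fixpoint answers (T : nat -> Q) (d : nat) (a : Sigma) (y : Q) (k : nat) : Q :=
  if k is k'.+1 then s (T (d - k)) (T (d - k')) a (answers T d a y k') else y.

Fixpoint tower n : nat -> Q :=
  if n is n'.+1 then fun l =>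
    if l <= height n' then answers (tower n') (height n') (al n') (e n) (height n' - l)
    else x n
  else fun l => if l == 0 then e 0 else x 0.

Lemma height_mono : {homo height : m n / m <= n}.
Proof. by apply: homo_leq => [//|m n k|n]; [apply: leq_trans | apply: leq_addr]. Qed.

Lemma tower_top n : tower n (height n) = x n.
Proof.
case: n => [|n] /=; case: (eqVneq (x _) (e _)) => [->|_] //=.
  by rewrite addn0 leqnn subnn.
by rewrite addn1 ltnn.
Qed.

Lemma tower_arrival n : tower n.+1 (height n) = e n.+1.
Proof. by rewrite /= leqnn subnn. Qed.

Lemma tower_answer n l : l < height n ->
  tower n.+1 l = s (tower n l) (tower n l.+1) (al n) (tower n.+1 l.+1).
Proof.
move=> lt_l; rewrite /= (ltnW lt_l) lt_l -(subnSK lt_l) /=.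
by congr (s (tower n _) (tower n _) _ _); lia.
Qed.

Lemma tower_step n l : l <= height n -> tower n.+1 l \in delta A (tower n l) (al n).
Proof.
move=> le_l; rewrite -(subKn le_l).
elim: (height n - l) (leq_subr l (height n)) => [|k IH] le_k.
  by rewrite subn0 tower_arrival tower_top.
rewrite tower_answer; last lia.
have -> : (height n - k.+1).+1 = height n - k by lia.
by apply: s_strategy; apply: IH; lia.
Qed.

Lemma tower_run n0 l : l <= height n0 ->
  run A (tower n0 l) (fun k => al (n0 + k)) (fun k => tower (n0 + k) l).
Proof.
move=> le_l; split=> [|k]; first by rewrite addn0.
by rewrite addnS; apply: tower_step; apply: leq_trans le_l (height_mono (leq_addr _ _)).
Qed.

Lemma tower_birth n l : l < height n ->
  exists n0, [/\ n0 <= n, l < height n0, tower n0 l = q & tower n0 l.+1 = p].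
Proof.
elim: n => [|n IH] lt_l.
  have l0 : l = 0 by move: lt_l => /=; lia.
  have x0e0 : x 0 != e 0 by move: lt_l => /=; case: eqP; lia.
  have [e0q x0p] := spoiler_restart x0e0.
  by exists 0; rewrite l0 /= x0e0 e0q x0p.
have [lt_l' | ge_l] := ltnP l (height n).
  by have [n0 [? ? ? ?]] := IH lt_l'; exists n0; split => //; lia.
move: lt_l => /=; case: (eqVneq (x n.+1) (e n.+1)) => [_|jump] /= lt_l; first lia.
have [e_q x_p] := spoiler_restart jump.
have -> : l = height n by lia.
exists n.+1; split=> //=; first by rewrite jump addn1.
- by rewrite leqnn subnn.
- by rewrite ltnn.
Qed.

Lemma tower_dup_play n0 l : l < height n0 -> forall m,
  dup_play s (tower n0 l) (fun k => tower (n0 + k) l.+1) (fun k => al (n0 + k)) m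
  = tower (n0 + m) l.
Proof.
move=> lt_l; elim=> [|m IH] /=; first by rewrite addn0.
rewrite IH addnS [RHS]tower_answer //.
exact: leq_trans lt_l (height_mono (leq_addr _ _)).
Qed.

Lemma tower_acc_descends l n : l <= height n -> tower n l \in acc A ->
  exists2 k, n <= k & tower k 0 \in acc A.
Proof.
elim: l n => [|l IH] n le_l accF; first by exists n.
have [n0 [le_n0 lt_l tower_q tower_p]] := tower_birth le_l.
have := tower_run lt_l; rewrite tower_p => /s_wins /(_ (n - n0)).
rewrite subnKC // => -[// | k le_k]; rewrite -tower_q tower_dup_play // => acc_k.
have [k' le_k' acc_k'] := IH _ (leq_trans (ltnW lt_l) (height_mono (leq_addr k n0))) acc_k.
by exists k' => //; lia.
Qed.

Lemma tower_bottom_visits N : exists2 n, N <= n & tower n 0 \in acc A.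
Proof.
have [n le_n /orP visit] := spoiler_visits N.
suff [k le_k acc_k] : exists2 k, n <= k & tower k 0 \in acc A.
  by exists k => //; apply: leq_trans le_k.
case: visit => [xF | eF]; first by apply: (@tower_acc_descends (height n)); rewrite ?tower_top.
case: n {le_n} eF => [|n] eF; first by exists 0.
by apply: (@tower_acc_descends (height n)); rewrite ?tower_arrival ?height_mono.
Qed.

Lemma lang_of_restarting_run : lang A q al.
Proof.
exists (fun n => tower n 0); split.
  by have := tower_run (leq0n (height 0)); rewrite /= e0.
by apply: pigeonhole_inf_often; apply: tower_bottom_visits.
Qed.

End RestartingRun.

Section OmegaConcat.

Variables (T : Type) (f : nat -> seq T).

Local Notation upto M := (flatten (mkseq f M)).

Definition omega_concat (z : nat -> T) : Prop :=
  forall M n x0, n < size (upto M) -> z n = nth x0 (upto M) n.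

Hypothesis f_unbounded : forall m, exists M, m <= size (upto M).

Lemma prefix_flatten_mkseq m n : m <= n -> exists t, upto n = upto m ++ t.
Proof.
elim: n => [|n IH]; first by rewrite leqn0 => /eqP ->; exists [::]; rewrite cats0.
rewrite leq_eqVlt ltnS => /predU1P [-> | /IH [t upto_n]]; first by exists [::]; rewrite cats0.
by exists (t ++ f n); rewrite mkseqS flatten_rcons upto_n catA.
Qed.

Lemma size_flatten_mkseq_mono m n : m <= n -> size (upto m) <= size (upto n).
Proof. by move=> /prefix_flatten_mkseq [t ->]; rewrite size_cat leq_addr. Qed.

Lemma nth_flatten_mkseq x0 m n k : k < size (upto m) -> k < size (upto n) ->
  nth x0 (upto m) k = nth x0 (upto n) k.
Proof.
wlog le_mn : m n / m <= n => [wlog_le | lt_m _].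
  by case: (leqP m n) => [|/ltnW] le ltm ltn; [|symmetry]; apply: wlog_le.
by have [t ->] := prefix_flatten_mkseq le_mn; rewrite nth_cat lt_m.
Qed.

Lemma omega_concat_exists (x0 : T) : exists z, omega_concat z.
Proof.
exists (fun n => nth x0 (upto (ex_minn (f_unbounded n.+1))) n) => M n y0 lt_n.
case: ex_minnP => m lt_m _; rewrite (set_nth_default y0) //.
exact: nth_flatten_mkseq.
Qed.

Lemma omega_concat_unique z z' : omega_concat z -> omega_concat z' -> z =1 z'.
Proof.
move=> zP z'P n; have [M lt_n] := f_unbounded n.+1.
by rewrite (zP M n (z n)) // (z'P M n (z n)).
Qed.

Lemma omega_concat_mkseq (al : nat -> T) :
  (forall M, upto M = mkseq al (size (upto M))) -> omega_concat al.
Proof. by move=> alP M n x0 lt_n; rewrite alP nth_mkseq. Qed.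

Lemma omega_concat_block z i k x0 : omega_concat z -> k < size (f i) ->
  z (size (upto i) + k) = nth x0 (f i) k.
Proof.
move=> zP lt_k; rewrite (zP i.+1 _ x0) mkseqS flatten_rcons ?size_cat ?ltn_add2l //.
by rewrite nth_cat ltnNge leq_addr /= addKn.
Qed.

Lemma omega_concat_path (r : rel T) v z : omega_concat z ->
  (forall M, path r v (upto M)) -> r v (z 0) /\ forall n, r (z n) (z n.+1).
Proof.
move=> zP r_path; split=> [|n].
  have [M lt_0] := f_unbounded 1.
  by have /(pathP v)/(_ 0 lt_0) := r_path M; rewrite -zP.
have [M lt_n] := f_unbounded n.+2.
by have /(pathP v)/(_ n.+1 lt_n) := r_path M; rewrite /= -!zP // ltnW.
Qed.

Lemma nonempty_block_at i : exists j, size (upto j) = size (upto i) /\ 0 < size (f j).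
Proof.
case: (ex_minnP (f_unbounded (size (upto i)).+1)) => -[|j] // lt_j min_j.
have le_j : size (upto j) <= size (upto i).
  by rewrite leqNgt; apply/negP => /min_j; rewrite ltnn.
have le_i : size (upto i) <= size (upto j).
  apply: size_flatten_mkseq_mono; rewrite leqNgt; apply/negP => /size_flatten_mkseq_mono.
  by rewrite leqNgt lt_j.
exists j; split; first by apply/eqP; rewrite eqn_leq le_j le_i.
by move: lt_j; rewrite mkseqS flatten_rcons size_cat; lia.
Qed.

Lemma omega_concat_has (P : pred T) z : omega_concat z ->
  (forall i, 0 < size (f i) -> has P (f i)) -> forall N, exists2 n, N <= n & P (z n).
Proof.
move=> zP P_blocks N; have [i le_N] := f_unbounded N.
have [j [eq_j /P_blocks/(has_nthP (z 0)) [k lt_k Pk]]] := nonempty_block_at i.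
exists (size (upto j) + k); first by rewrite eq_j (leq_trans le_N) ?leq_addr.
by rewrite (omega_concat_block (z 0)).
Qed.

End OmegaConcat.

Lemma map_flatten_mkseq (T U : Type) (g : T -> U) (f : nat -> seq T) (f' : nat -> seq U) M :
  (forall i, map g (f i) = f' i) -> map g (flatten (mkseq f M)) = flatten (mkseq f' M).
Proof. by move=> gf; rewrite map_flatten /mkseq -map_comp (eq_map gf). Qed.

Lemma omega_concat_map (T U : Type) (g : T -> U) (f : nat -> seq T) (f' : nat -> seq U) z :
  (forall i, map g (f i) = f' i) -> omega_concat f z -> omega_concat f' (g \o z).
Proof.
move=> gf zP M n u0; rewrite -(map_flatten_mkseq M gf) size_map => lt_n.
by rewrite (nth_map (z n)) // -zP.
Qed.

(* A triple [z] is the transition [src z -(letter z)-> dst z]. A path from [r] is a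
   sequence of transitions related by [path] to a dummy predecessor [v] with
   [dst v = r]. *)
Definition src {Sigma Q : Type} (z : Q * Sigma * Q) : Q := z.1.1.
Definition letter {Sigma Q : Type} (z : Q * Sigma * Q) : Sigma := z.1.2.
Definition dst {Sigma Q : Type} (z : Q * Sigma * Q) : Q := z.2.

Section Steps.

Variables (Sigma Q : finType) (A : buchi Sigma Q).

Local Notation step := (Q * Sigma * Q)%type.

Definition valid_step (z : step) : bool := dst z \in delta A (src z) (letter z).

Definition continues (z z' : step) : bool := valid_step z' && (src z' == dst z).

Definition visits (z : step) : bool := (src z \in acc A) || (dst z \in acc A).

Lemma steps_of_reach r w r' b : reach A r w r' b -> exists zs : seq step,
  [/\ map letter zs = w, forall v, dst v = r -> path continues v zs,
      last r (map dst zs) = r' & has [in acc A] (r :: map dst zs) = b].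
Proof.
elim=> {r w r' b} [r | r a r1 w r' b r_r1 _ [zs [zs_w zs_path zs_last zs_acc]]].
  by exists [::]; split; rewrite //= orbF.
exists ((r, a, r1) :: zs); split=> /=; [by rewrite zs_w | | by [] | by rewrite -zs_acc].
by move=> v dst_v; rewrite /continues /valid_step /= r_r1 dst_v eqxx; apply: zs_path.
Qed.

Variables (p q : Q).

Definition continues_or_restarts (z z' : step) : bool :=
  valid_step z' && ((src z' == dst z) || (dst z == q) && (src z' == p)).

Definition restart_piece (zs : seq step) : Prop :=
  (forall v, dst v = q -> path continues_or_restarts v zs) /\ last q (map dst zs) = q.

Lemma continues_sub : subrel continues continues_or_restarts.
Proof.
by move=> z z' /andP [valid_z' linked]; rewrite /continues_or_restarts valid_z' linked.
Qed.

Lemma restart_piece_path zs : (forall v, dst v = p -> path continues v zs) ->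
  last p (map dst zs) = q -> restart_piece zs.
Proof.
case: zs => [|z zs] zs_path zs_last; first by split.
have /andP [/andP [z_valid /eqP src_z] zs_path'] := zs_path (src z, letter z, p) erefl.
split=> [v dst_v | //] /=.
rewrite (sub_path continues_sub zs_path') andbT /continues_or_restarts z_valid.
by rewrite src_z dst_v !eqxx orbT.
Qed.

Lemma restart_piece_cat zs1 zs2 :
  restart_piece zs1 -> restart_piece zs2 -> restart_piece (zs1 ++ zs2).
Proof.
move=> [path1 last1] [path2 last2]; split=> [v dst_v|].
  by rewrite cat_path path1 //= path2 // -last_map dst_v.
by rewrite map_cat last_cat last1.
Qed.

Lemma restart_piece_flatten (zss : seq (seq step)) :
  (forall zs, zs \in zss -> restart_piece zs) -> restart_piece (flatten zss).
Proof.
elim: zss => [|zs zss IH] pieces /=; first by split.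
apply: restart_piece_cat; first by apply: pieces; rewrite mem_head.
by apply: IH => zs' in_zss; apply: pieces; rewrite inE in_zss orbT.
Qed.

Lemma star_restart_piece w : star (fun u => reaches A p u q) w ->
  exists zs, map letter zs = w /\ restart_piece zs.
Proof.
case=> us [us_reach <-]; elim: us us_reach => [|u us IH] us_reach /=.
  by exists [::]; do 2!split.
have [b /steps_of_reach [zs [zs_w zs_path zs_last _]]] := us_reach u (mem_head _ _).
have [|zs' [zs'_w zs'_piece]] := IH.
  by move=> u' in_us; apply: us_reach; rewrite inE in_us orbT.
exists (zs ++ zs'); split; first by rewrite map_cat zs_w zs'_w.
exact: restart_piece_cat (restart_piece_path zs_path zs_last) zs'_piece.
Qed.

Lemma block_steps w :
  lconcat (star (fun u => reaches A p u q)) (fun u => reachesF A p u q) w ->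
  exists zs, [/\ map letter zs = w, restart_piece zs & 0 < size zs -> has visits zs].
Proof.
case=> w1 [w2 [/star_restart_piece [zs1 [zs1_w zs1_piece]] []]].
move=> /steps_of_reach [zs2 [zs2_w zs2_path zs2_last zs2_acc]] ->.
exists (zs1 ++ zs2); split; first by rewrite map_cat zs1_w zs2_w.
  exact: restart_piece_cat zs1_piece (restart_piece_path zs2_path zs2_last).
rewrite has_cat size_cat; case: zs2 {zs2_w} zs2_path zs2_last zs2_acc => [|z zs2] zs2_path.
  move=> /= p_q; rewrite orbF p_q => qF.
  case: zs1 {zs1_w} zs1_piece => [|z zs1] [zs1_path _] //= _.
  have /andP [/andP [_ /orP src_z] _] := zs1_path (src z, letter z, q) erefl.
  by rewrite /visits; case: src_z => [/eqP -> | /andP [_ /eqP ->]]; rewrite ?p_q qF.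
have /andP [/andP [_ /eqP src_z] _] := zs2_path (src z, letter z, p) erefl.
move=> _; rewrite -[p :: _]cat1s has_cat has_seq1 => /orP [pF _ | dF _].
  by rewrite /= /visits src_z pF /= orbT.
apply/orP; right; move: dF; rewrite has_map; apply: sub_has => t /= dst_t.
by rewrite /visits dst_t orbT.
Qed.

End Steps.

Lemma lang_of_restart_steps (Sigma Q : finType) (A : buchi Sigma Q) (p q : Q) s
    (al : nat -> Sigma) (v : Q * Sigma * Q) (z : nat -> Q * Sigma * Q) :
  strategy A s ->
  (forall al ps, run A p al ps -> forall i, ps i \in acc A ->
     exists2 k, i <= k & dup_play s q ps al k \in acc A) ->
  dst v = q -> continues_or_restarts A p q v (z 0) ->
  (forall n, continues_or_restarts A p q (z n) (z n.+1)) ->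
  (forall n, letter (z n) = al n) ->
  (forall N, exists2 n, N <= n & visits A (z n)) -> lang A q al.
Proof.
move=> s_strategy s_wins dst_v z_start z_next z_letter z_visits.
pose e n := if n is n'.+1 then dst (z n') else q.
have z_prev n : continues_or_restarts A p q (if n is n'.+1 then z n' else v) (z n).
  by case: n.
apply: (@lang_of_restarting_run _ _ A p q s s_strategy s_wins al (fun n => src (z n)) e).
- by [].
- by move=> n; rewrite /= -z_letter; case/andP: (z_prev n).
- rewrite /e => -[|n] /=.
    case/andP: (z_prev 0) => _ /orP [/eqP -> | /andP [_ /eqP ->]] //.
    by rewrite dst_v eqxx.
  case/andP: (z_prev n.+1) => _ /orP [/eqP -> | /andP [/eqP -> /eqP ->]] //.
  by rewrite eqxx.
- move=> N; have [n le_n /orP [srcF | dstF]] := z_visits N; first by exists n; rewrite ?srcF.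
  by exists n.+1; rewrite ?leqW //= dstF orbT.
Qed.

Theorem lemma10 (Sigma Q : finType) (A : buchi Sigma Q) (p q : Q) :
  complete A -> delayed_sim A p q ->
  forall al : nat -> Sigma,
    omega (lconcat (star (fun w => reaches A p w q)) (fun w => reachesF A p w q)) al ->
    lang A q al.
Proof.
move=> _ [s [s_strategy s_wins]] al [ws [ws_block [ws_prefix ws_unbounded]]].
have [zs zsP] := choice _ (fun i => block_steps (ws_block i)).
have zs_letters i : map letter (zs i) = ws i by case: (zsP i).
have zs_unbounded m : exists M, m <= size (flatten (mkseq zs M)).
  have [M le_m] := ws_unbounded m; exists M.
  by rewrite -(size_map letter) (map_flatten_mkseq _ zs_letters).
have [z zP] := omega_concat_exists zs_unbounded (q, al 0, q).
have [|z_start z_next] := omega_concat_path zs_unbounded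
    (r := continues_or_restarts A p q) (v := (q, al 0, q)) zP.
  by move=> M; apply: (restart_piece_flatten _).1 => // _ /mapP [i _ ->]; case: (zsP i).
apply: (lang_of_restart_steps s_strategy s_wins _ z_start z_next) => //.
  exact: (omega_concat_unique ws_unbounded (omega_concat_map zs_letters zP)
    (omega_concat_mkseq ws_prefix)).
by apply: (omega_concat_has zs_unbounded (P := visits A) zP) => i; case: (zsP i).
Qed.
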